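(* Let $\lambda\in P$, $1\le k\le n-1$, $r\ge2$, $m\ge1$. If $\lambda$ has a neighborhood of type $(m(k+1),m(r-1))$, then $\lambda$ has a neighborhood of type $(k+1,r-1)$. If $d\ge1$ and $\lambda$ has a neighborhood of type $(m(k+1)+d,m(r-1))$, then $\lambda$ has two (distinct) neighborhoods of type $(k+1,r-1)$.
   Context: Let $P=\mathbb Z^n$. For $\lambda\in P$, $\rho(\lambda)$ is the unique permutation of $(\frac{n-1}2,\frac{n-3}2,\dots,-\frac{n-1}2)$ with $\rho(\lambda)_i>\rho(\lambda)_j$ iff $\lambda_i>\lambda_j$ or ($\lambda_i=\lambda_j$ and $i<j$). For integers $a\ge2,b\ge1$, an ordered pair $(i,j)$ is a neighborhood of type $(a,b)$ in $\lambda$ if $\rho(\lambda)_i-\rho(\lambda)_j=a-1$ and either $\lambda_i-\lambda_j\le b-1$, or $\lambda_i-\lambda_j=b$ and $j<i$. *)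

From mathcomp Require Import all_boot all_order all_algebra.
Set Implicit Arguments. Unset Strict Implicit. Unset Printing Implicit Defensive.
Import Order.TTheory GRing.Theory Num.Theory.
Local Open Scope ring_scope.

(* A weight lambda in P = Z^n is a function 'I_n -> int. *)

Definition before (n : nat) (lam : 'I_n -> int) (j i : 'I_n) : bool :=
  (lam i < lam j) || ((lam j == lam i) && (j < i)%N).

Definition pos (n : nat) (lam : 'I_n -> int) (i : 'I_n) : nat :=
  #|[pred j | before lam j i]|.

(* rho(lambda)_i = (n-1)/2 - pos i : the unique permutation of
   ((n-1)/2, (n-3)/2, ..., -(n-1)/2) with rho_i > rho_j iff
   lambda_i > lambda_j or (lambda_i = lambda_j and i < j). *)
Definition rho (n : nat) (lam : 'I_n -> int) (i : 'I_n) : rat :=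
  ((n%:R - 1) / 2) - (pos lam i)%:R.

Definition nbhd (n : nat) (lam : 'I_n -> int) (a b : nat) (i j : 'I_n) : Prop :=
  rho lam i - rho lam j = (a%:R - 1) /\
  (lam i - lam j <= b%:Z - 1 \/ (lam i - lam j = b%:Z /\ (j < i)%N)).

Definition has_nbhd (n : nat) (lam : 'I_n -> int) (a b : nat) : Prop :=
  exists i j : 'I_n, nbhd lam a b i j.

From mathcomp Require Import all_boot all_order all_algebra.
From mathcomp Require Import zify ring.
Import Order.TTheory GRing.Theory Num.Theory.
Set Implicit Arguments. Unset Strict Implicit.
Local Open Scope ring_scope.

(* Order the indices by position, so that (i, j) is a
   neighborhood of type (a, b) iff j sits a - 1 places after i and i does
   not lead j by b (ties broken by index).  Cut the window from i to j of a
   neighborhood of type (m(k+1), m(r-1)) into m consecutive blocks of length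
   k+1.  If no block were a neighborhood of type (k+1, r-1), each block would
   contribute a lead of r-1 and the gaps between blocks a lead of 0, so i
   would lead j by m(r-1), a contradiction.  When the window is longer by
   d >= 1, the same argument also applies to the blocks starting one place
   after i; the two neighborhoods found start at positions that differ by
   1 modulo k+1, hence are distinct. *)

Section Positions.

Variables (n : nat) (lam : 'I_n -> int).

Lemma before_irr x : ~~ before lam x x.
Proof. by rewrite /before ltxx ltnn andbF. Qed.

Lemma before_trans x y z : before lam x y -> before lam y z -> before lam x z.
Proof. rewrite /before; lia. Qed.

Lemma before_total x y : x != y -> before lam x y || before lam y x.
Proof. by rewrite /before -val_eqE /=; lia. Qed.

Lemma pos_lt x y : before lam x y -> (pos lam x < pos lam y)%N.
Proof.
move=> bxy; apply: proper_card; apply/properP; split.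
- by apply/subsetP => z; rewrite !inE => /before_trans; apply.
- by exists x; rewrite !inE // before_irr.
Qed.

Lemma pos_ltn x : (pos lam x < n)%N.
Proof.
rewrite -[X in (_ < X)%N]card_ord; apply: proper_card; apply/properP.
by split; [apply/subsetP | exists x; rewrite !inE // before_irr].
Qed.

Lemma pos_inj : injective (pos lam).
Proof.
move=> x y e; apply/eqP/negPn/negP => /before_total.
by case/orP => /pos_lt; rewrite e ltnn.
Qed.

Lemma pos_surj p : (p < n)%N -> exists x, pos lam x = p.
Proof.
move=> lt_pn; pose f x := Ordinal (pos_ltn x).
have f_inj : injective f by move=> x y /(congr1 val) /pos_inj.
by exists (invF f_inj (Ordinal lt_pn)); rewrite -[pos _ _]/(val (f _)) f_invF.
Qed.

(* [~~ leads b i j] is the second clause of [nbhd]. *)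
Definition leads (c : int) (x y : 'I_n) : bool :=
  (c < lam x - lam y) || ((lam x - lam y == c) && (x <= y)%N).

Lemma leads_trans c1 c2 x y z :
  leads c1 x y -> leads c2 y z -> leads (c1 + c2) x z.
Proof. rewrite /leads; lia. Qed.

Lemma leads_pos_le x y : (pos lam x <= pos lam y)%N -> leads 0 x y.
Proof.
rewrite /leads; have [-> _|nxy le_xy] := eqVneq x y.
  by rewrite subrr eqxx leqnn orbT.
have /orP[|/pos_lt] := before_total nxy; last by lia.
by rewrite /before; lia.
Qed.

Lemma nbhdE a b i j :
  nbhd lam a.+1 b i j <-> pos lam j = (pos lam i + a)%N /\ ~~ leads b%:Z i j.
Proof.
rewrite /nbhd /rho /leads.
have -> : (n%:R - 1) / 2 - (pos lam i)%:R - ((n%:R - 1) / 2 - (pos lam j)%:R)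
          = (pos lam j)%:R - (pos lam i)%:R :> rat by ring.
have -> : (a.+1%:R - 1 = a%:R :> rat) by rewrite -addn1 natrD addrK.
have rho_gap : (pos lam j)%:R - (pos lam i)%:R = a%:R :> rat
               <-> pos lam j = (pos lam i + a)%N.
  split=> [/eqP|->]; last by rewrite natrD addrAC subrr add0r.
  by rewrite subr_eq -natrD eqr_nat addnC => /eqP.
rewrite rho_gap; split=> -[-> cl]; split=> //; lia.
Qed.

Lemma block_nbhd_or_leads k b x y : (pos lam x + k <= pos lam y)%N ->
  (exists c, nbhd lam k.+1 b x c) \/ leads b%:Z x y.
Proof.
move=> le_xy; have [c pos_c] := pos_surj (leq_ltn_trans le_xy (pos_ltn y)).
have [lead_xc|no_lead] := boolP (leads b%:Z x c).
  right; rewrite -[b%:Z]addr0; apply: leads_trans lead_xc (leads_pos_le _).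
  by rewrite pos_c.
by left; exists c; apply/nbhdE.
Qed.

Lemma blocks_nbhd_or_leads k b x m y :
  (pos lam x + m.+1 * k.+1 <= (pos lam y).+1)%N ->
  (exists t a c, pos lam a = (pos lam x + t * k.+1)%N /\ nbhd lam k.+1 b a c)
  \/ leads (m.+1 * b)%N%:Z x y.
Proof.
elim: m y => [|m IHm] y le_xy.
  have le_xy' : (pos lam x + k <= pos lam y)%N by lia.
  have [[c nb]|lead] := block_nbhd_or_leads b le_xy'; last by right; rewrite mul1n.
  by left; exists 0%N, x, c; rewrite addn0.
have lt_zn : (pos lam x + m.+1 * k.+1 < n)%N.
  by apply: leq_ltn_trans (pos_ltn y); lia.
have [z pos_z] := pos_surj lt_zn.
have [|nb|lead_xz] := IHm z; [lia | by left | ].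
have le_zy : (pos lam z + k <= pos lam y)%N by lia.
have [[c nb]|lead_zy] := block_nbhd_or_leads b le_zy.
  by left; exists m.+1, z, c.
by right; have := leads_trans lead_xz lead_zy; rewrite /leads; lia.
Qed.

Lemma window_has_block_nbhd k b m i j x :
  ~~ leads (m.+1 * b)%N%:Z i j -> (pos lam i <= pos lam x)%N ->
  (pos lam x + m.+1 * k.+1 <= (pos lam j).+1)%N ->
  exists t a c, pos lam a = (pos lam x + t * k.+1)%N /\ nbhd lam k.+1 b a c.
Proof.
move=> no_lead le_ix le_xj; have [//|lead_xj] := blocks_nbhd_or_leads b le_xj.
by move: no_lead; rewrite -[_%:Z]add0r (leads_trans (leads_pos_le le_ix) lead_xj).
Qed.

End Positions.

Lemma block_starts_neq k p t1 t2 : (0 < k)%N ->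
  (p + t1 * k.+1)%N != (p + 1 + t2 * k.+1)%N.
Proof.
move=> k_gt0; apply/eqP; rewrite -addnA => /addnI /(congr1 (modn^~ k.+1)).
by rewrite /= modnMl addnC modnMDl modn_small.
Qed.

Theorem lemma4p3 (n : nat) (lam : 'I_n -> int) (k r m : nat) :
  (1 <= k)%N -> (k <= n - 1)%N -> (2 <= r)%N -> (1 <= m)%N ->
  (has_nbhd lam (m * (k + 1)) (m * (r - 1)) -> has_nbhd lam (k + 1) (r - 1)) /\
  (forall d : nat, (1 <= d)%N ->
     has_nbhd lam (m * (k + 1) + d) (m * (r - 1)) ->
     exists i j i' j' : 'I_n,
       (i, j) <> (i', j') /\ nbhd lam (k + 1) (r - 1) i j /\
       nbhd lam (k + 1) (r - 1) i' j').
Proof.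
rewrite addn1 => k_gt0 _ _; case: m => // m _.
rewrite [(_ * k.+1)%N]mulSnr addnS; split.
  move=> [i [j /nbhdE [pos_j no_lead]]].
  have window : (pos lam i + m.+1 * k.+1 <= (pos lam j).+1)%N by lia.
  have [_ [a [c [_ nb]]]] := window_has_block_nbhd no_lead (leqnn _) window.
  by exists a, c.
move=> d d_gt0; rewrite addSn => -[i [j /nbhdE [pos_j no_lead]]].
have window : (pos lam i + m.+1 * k.+1 <= (pos lam j).+1)%N by lia.
have [t [a [c [pos_a nb]]]] := window_has_block_nbhd no_lead (leqnn _) window.
have [i' pos_i'] : exists i', pos lam i' = (pos lam i + 1)%N.
  by apply: pos_surj; have := pos_ltn lam j; lia.
have window' : (pos lam i' + m.+1 * k.+1 <= (pos lam j).+1)%N by lia.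
have le_ii' : (pos lam i <= pos lam i')%N by lia.
have [t' [a' [c' [pos_a' nb']]]] := window_has_block_nbhd no_lead le_ii' window'.
exists a, c, a', c'; split=> // -[eq_aa' _].
move: pos_a'; rewrite -eq_aa' pos_a pos_i' => /eqP.
by rewrite (negbTE (block_starts_neq _ _ _ k_gt0)).
Qed.
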